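(* Let $F$ be a field of characteristic $0$, let $A$ be the free associative $F$-algebra without unity on free generators $x,y$, let $I$ be the two-sided ideal of $A$ generated by the following elements: (i) all monomials of degree $8$; (ii) all monomials of degree greater than $2$ in $x$; (iii) all monic monomials of degree $7$ except $yxy^3xy$ and $y^2xyxy^2$; (iv) all monic monomials of degree less than $7$ which do not divide either of the monomials $yxy^3xy$ and $y^2xyxy^2$; (v) the polynomial $2xy^3xy-5yxyxy^2-2yxy^3x+5y^2xyxy$; (vi) the polynomial $2yxy^3xy-5y^2xyxy^2$; let $B=A/I$ and let $L=[B]$. Then $L$ is a $5$-Engel Lie algebra such that the group $L^*$ is not $5$-Engel.
   Context: For monic monomials $m,n$ in $x,y$, $m$ divides $n$ if $n=m_1 m m_2$ for some monic monomials $m_1,m_2$ (possibly equal to $1$). $[B]$ is the Lie algebra on $B$ with bracket $[a,b]=ab-ba$; it is nilpotent since $B^8=0$. For a nilpotent Lie algebra $L$ over a field of characteristic $0$, $L^*$ denotes the group with underlying set $L$ and multiplication given by the Baker–Campbell–Hausdorff formula $u*v=\log(e^ue^v)=u+v+\tfrac12[u,v]+\cdots$. Set $[x,{}_{(1)}y]=[x,y]$, $[x,{}_{(k+1)}y]=[[x,{}_{(k)}y],y]$; a Lie algebra is $n$-Engel if $[u,{}_{(n)}v]=0$ for all $u,v$. For a group, $(x,y)=x^{-1}y^{-1}xy$, $(x,{}_{(k+1)}y)=((x,{}_{(k)}y),y)$; a group is $n$-Engel if $(u,{}_{(n)}v)=1$ for all $u,v$. *)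

From mathcomp Require Import all_boot all_order all_algebra.
Set Implicit Arguments. Unset Strict Implicit. Unset Printing Implicit Defensive.
Import Order.TTheory GRing.Theory Num.Theory.
Local Open Scope ring_scope.

(* Words over the alphabet {x, y}: x is [false], y is [true].
   A (monic) monomial of the free algebra is a word; the empty word is 1. *)
Definition lx : bool := false.
Definition ly : bool := true.
Definition word := seq bool.

Section FreeAlg.
Variable F : fieldType.

(* Noncommutative series over F in x, y: coefficient functions on words. *)
Definition ncpoly := word -> F.

(* The free associative algebra without unity A: finitely supported
   coefficient functions with zero constant term. *)
Definition in_A (p : ncpoly) : Prop :=
  p [::] = 0 /\ exists s : seq word, forall w, w \notin s -> p w = 0.

Definition pzero : ncpoly := fun _ => 0.
Definition padd (p q : ncpoly) : ncpoly := fun w => p w + q w.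
Definition popp (p : ncpoly) : ncpoly := fun w => - p w.
Definition psub (p q : ncpoly) : ncpoly := padd p (popp q).
Definition pscale (c : F) (p : ncpoly) : ncpoly := fun w => c * p w.
Definition pmul (p q : ncpoly) : ncpoly :=
  fun w => \sum_(i < (size w).+1) p (take i w) * q (drop i w).
Definition mono (w : word) : ncpoly := fun u => if u == w then 1 else 0.

(* positive powers u^k, k >= 1 (ppow u 0 = u is never used below) *)
Fixpoint ppow (u : ncpoly) (k : nat) : ncpoly :=
  match k with 0 | 1 => u | k'.+1 => pmul (ppow u k') u end.

Definition is_ideal (J : ncpoly -> Prop) : Prop :=
  [/\ J pzero,
      (forall p q, J p -> J q -> J (padd p q)),
      (forall c p, J p -> J (pscale c p)),
      (forall a p, in_A a -> J p -> J (pmul a p)) &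
      (forall a p, in_A a -> J p -> J (pmul p a))].

Definition gen_ideal (S : ncpoly -> Prop) (p : ncpoly) : Prop :=
  forall J, is_ideal J -> (forall s, S s -> J s) -> J p.

Definition m1 : word := [:: ly; lx; ly; ly; ly; lx; ly].
Definition m2 : word := [:: ly; ly; lx; ly; lx; ly; ly].

Definition rel5 : ncpoly :=
  padd (padd (pscale 2 (mono [:: lx; ly; ly; ly; lx; ly]))
             (pscale (-5) (mono [:: ly; lx; ly; lx; ly; ly])))
       (padd (pscale (-2) (mono [:: ly; lx; ly; ly; ly; lx]))
             (pscale 5 (mono [:: ly; ly; lx; ly; lx; ly]))).
Definition rel6 : ncpoly := padd (pscale 2 (mono m1)) (pscale (-5) (mono m2)).

Definition gensI (p : ncpoly) : Prop :=
  (exists w : word, p = mono w /\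
     [\/ size w = 8%N,
         (2 < count (pred1 lx) w)%N,
         [/\ size w = 7%N, w != m1 & w != m2]
       | [/\ (0 < size w < 7)%N, ~~ infix w m1 & ~~ infix w m2]])
  \/ p = rel5
  \/ p = rel6.

Definition inI (p : ncpoly) : Prop := gen_ideal gensI p.

(* Lie bracket of [B] (on representatives in A) and Engel iterates *)
Definition lbr (p q : ncpoly) : ncpoly := psub (pmul p q) (pmul q p).
Definition lie_engel (n : nat) (u v : ncpoly) : ncpoly :=
  iter n (fun z => lbr z v) u.

(* Baker-Campbell-Hausdorff product u*v = log(e^u e^v) computed in B.
   Since B^8 = 0, the series exp and log are exactly their truncations at
   degree 7: e^u - 1 = sum_{k=1}^7 u^k/k!, log(1+w) = sum_{k=1}^7 (-1)^(k+1) w^k/k. *)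
Definition pexpm1 (u : ncpoly) : ncpoly :=
  \big[padd/pzero]_(1 <= k < 8) pscale (k`!%:R)^-1 (ppow u k).
Definition plog1p (w : ncpoly) : ncpoly :=
  \big[padd/pzero]_(1 <= k < 8) pscale ((-1) ^+ k.+1 / k%:R) (ppow w k).
Definition bch (u v : ncpoly) : ncpoly :=
  let a := pexpm1 u in let b := pexpm1 v in
  plog1p (padd (padd a b) (pmul a b)).

(* group commutator (u,v) = u^{-1} v^{-1} u v in L^*; the inverse of u is -u *)
Definition gcomm (u v : ncpoly) : ncpoly :=
  bch (bch (bch (popp u) (popp v)) u) v.
Definition grp_engel (n : nat) (u v : ncpoly) : ncpoly :=
  iter n (fun z => gcomm z v) u.

End FreeAlg.

(* Every monomial that is not a factor of m1 = yxy^3xy or m2 = y^2xyxy^2 lies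
   in I, and the set S0 of these factors (1 included) is closed under taking
   factors.  Hence p in A lies in I exactly when its restriction to S0 is a
   combination t (v) + s (vi), and the coefficients of a product on S0 only
   involve coefficients of the factors on S0.  Both claims thus reduce to finite
   computations with coefficient vectors on S0, carried out by reflection over
   polynomials with rational coefficients and evaluated in F (characteristic 0
   makes the denominators invertible):
   - for generic u, v (one variable per coefficient on S0), [u, 5 v] restricted
     to S0 is such a combination;
   - for u = x, v = y, the group commutator (u, 5 v), computed with the
     truncated Baker-Campbell-Hausdorff series, has 5 c(m1) + 2 c(m2) = 12,
     whereas this linear form vanishes on I. *)

From Stdlib Require Import ZArith QArith FunctionalExtensionality.
From mathcomp Require Import all_boot all_order all_algebra ring.
From mathcomp Require ssrZ.
Import GRing.Theory ssrZ.Instances.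

Set Implicit Arguments. Unset Strict Implicit. Unset Printing Implicit Defensive.
Local Close Scope Q_scope.
Local Open Scope ring_scope.

Section RationalsInField.
Variable F : fieldType.
Hypothesis charF : [pchar F] =i pred0.

Definition ratZ (z : Z) : F := (ssrZ.int_of_Z z)%:~R.

Lemma ratZD a b : ratZ (Z.add a b) = ratZ a + ratZ b.
Proof. by rewrite /ratZ -intrD -(rmorphD ssrZ.int_of_Z). Qed.

Lemma ratZM a b : ratZ (Z.mul a b) = ratZ a * ratZ b.
Proof. by rewrite /ratZ -intrM -(rmorphM ssrZ.int_of_Z). Qed.

Lemma ratZN a : ratZ (Z.opp a) = - ratZ a.
Proof. by rewrite /ratZ -intrN -(rmorphN ssrZ.int_of_Z). Qed.

Lemma ratZ_pos (p : positive) : ratZ (Zpos p) = (Pos.to_nat p)%:R.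
Proof. by []. Qed.

Lemma ratZ_pos_neq0 p : ratZ (Zpos p) != 0.
Proof.
rewrite ratZ_pos ((pcharf0P F).1 charF) -lt0n; apply/ltP; exact: Pos2Nat.is_pos.
Qed.

Definition ratQ (q : Q) : F := ratZ (Qnum q) / ratZ (Zpos (Qden q)).

Lemma ratQ_eq a b : Qeq a b -> ratQ a = ratQ b.
Proof.
rewrite /Qeq /ratQ => /(congr1 ratZ); rewrite !ratZM => h.
by apply/eqP; rewrite eqr_div ?ratZ_pos_neq0 // h.
Qed.

Lemma ratQD a b : ratQ (Qplus a b) = ratQ a + ratQ b.
Proof.
case: a b => [an ad] [bn bd]; rewrite /ratQ /Qplus /=.
have -> : Zpos (ad * bd) = Z.mul (Zpos ad) (Zpos bd) by [].
have := ratZ_pos_neq0 ad; have := ratZ_pos_neq0 bd.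
by rewrite ratZD !ratZM => h1 h2; field; rewrite h1 h2.
Qed.

Lemma ratQM a b : ratQ (Qmult a b) = ratQ a * ratQ b.
Proof.
case: a b => [an ad] [bn bd]; rewrite /ratQ /Qmult /=.
have -> : Zpos (ad * bd) = Z.mul (Zpos ad) (Zpos bd) by [].
have := ratZ_pos_neq0 ad; have := ratZ_pos_neq0 bd.
by rewrite !ratZM => h1 h2; field; rewrite h1 h2.
Qed.

Lemma ratQN a : ratQ (Qopp a) = - ratQ a.
Proof. by case: a => an ad; rewrite /ratQ /= ratZN mulNr. Qed.

Lemma ratQ_red a : ratQ (Qred a) = ratQ a.
Proof. exact/ratQ_eq/Qred_correct. Qed.

Lemma ratQ_int z : ratQ (Qmake z 1) = ratZ z.
Proof. by rewrite /ratQ divr1. Qed.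

Lemma ratQ_frac z n : n != 0%N -> ratQ (Qmake z (Pos.of_nat n)) = ratZ z / n%:R.
Proof. by move=> n0; rewrite /ratQ ratZ_pos Nat2Pos.id //; apply/eqP. Qed.

Definition exp_coef (k : nat) : Q := Qmake 1 (Pos.of_nat k`!).
Definition log_coef (k : nat) : Q := Qmake (if odd k then 1 else -1) (Pos.of_nat k).

Lemma ratQ_exp_coef k : ratQ (exp_coef k) = (k`!%:R)^-1.
Proof.
rewrite /exp_coef ratQ_frac; last by rewrite -lt0n fact_gt0.
by rewrite /ratZ /= div1r.
Qed.

Lemma ratQ_log_coef k : (0 < k)%N -> ratQ (log_coef k) = (-1) ^+ k.+1 / k%:R.
Proof.
move=> k0; rewrite /log_coef ratQ_frac -?lt0n // -signr_odd /=.
by case: (odd k); rewrite /ratZ.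
Qed.

End RationalsInField.

(* Keeps [/=] from unfolding [Qred] in the proofs below. *)
#[local] Arguments Qred : simpl never.

(* A monomial is the sorted list of its variable indices; normalisation merges
   equal monomials and drops zero terms, so polynomial identities are checked
   with [nilp]. *)
Definition qmonom := seq nat.
Definition qmpoly := seq (qmonom * Q).

Fixpoint qp_ins (t : qmonom * Q) (p : qmpoly) : qmpoly :=
  match p with
  | [::] => [:: t]
  | t' :: p' =>
      if t.1 == t'.1 then
        let c := Qred (Qplus t.2 t'.2) in
        if Qeq_bool c 0 then p' else (t.1, c) :: p'
      else t' :: qp_ins t p'
  end.

Definition qp_norm (p : qmpoly) : qmpoly := foldr qp_ins [::] p.
Definition qp_const (c : Q) : qmpoly := [:: ([::], c)].
Definition qp_var (i : nat) : qmpoly := [:: ([:: i], Qmake 1 1)].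
Definition qp_add (p q : qmpoly) : qmpoly := qp_norm (p ++ q).
Definition qp_opp (p : qmpoly) : qmpoly := [seq (t.1, Qopp t.2) | t <- p].
Definition qp_scale (c : Q) (p : qmpoly) : qmpoly :=
  qp_norm [seq (t.1, Qred (Qmult c t.2)) | t <- p].
Definition qp_mul (p q : qmpoly) : qmpoly :=
  qp_norm [seq (sort leq (t.1 ++ t'.1), Qred (Qmult t.2 t'.2)) | t <- p, t' <- q].
Definition qp_sum (ps : seq qmpoly) : qmpoly := foldr qp_add [::] ps.

Section Evaluation.
Variable F : fieldType.
Hypothesis charF : [pchar F] =i pred0.
Variable rho : nat -> F.

Definition qp_eval (p : qmpoly) : F :=
  \sum_(t <- p) ratQ F t.2 * \prod_(i <- t.1) rho i.

Lemma qp_eval_cons t p :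
  qp_eval (t :: p) = ratQ F t.2 * \prod_(i <- t.1) rho i + qp_eval p.
Proof. by rewrite /qp_eval big_cons. Qed.

Lemma qp_eval_nil : qp_eval [::] = 0.
Proof. by rewrite /qp_eval big_nil. Qed.

Lemma qp_eval_ins t p : qp_eval (qp_ins t p) = qp_eval (t :: p).
Proof.
elim: p => [|t' p IH] //; rewrite [qp_ins _ _]/=.
case: eqP => [e|_]; last by rewrite !qp_eval_cons IH qp_eval_cons addrCA.
have sumE : ratQ F (Qred (Qplus t.2 t'.2)) = ratQ F t.2 + ratQ F t'.2.
  by rewrite (ratQ_red charF) (ratQD charF).
case: ifP => [/Qeq_bool_eq/(ratQ_eq charF) c0|_].
  rewrite !qp_eval_cons -e addrA -mulrDl -sumE c0.
  by rewrite /ratQ /= mul0r mul0r add0r.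
by rewrite !qp_eval_cons sumE e mulrDl addrA.
Qed.

Lemma qp_eval_norm p : qp_eval (qp_norm p) = qp_eval p.
Proof. by elim: p => [|t p IH] //=; rewrite qp_eval_ins !qp_eval_cons IH. Qed.

Lemma qp_eval_const c : qp_eval (qp_const c) = ratQ F c.
Proof. by rewrite qp_eval_cons qp_eval_nil big_nil mulr1 addr0. Qed.

Lemma qp_eval_var i : qp_eval (qp_var i) = rho i.
Proof. by rewrite qp_eval_cons qp_eval_nil big_seq1 addr0 /ratQ /= divr1 mul1r. Qed.

Lemma qp_evalD p q : qp_eval (qp_add p q) = qp_eval p + qp_eval q.
Proof. by rewrite /qp_add qp_eval_norm /qp_eval big_cat. Qed.

Lemma qp_evalN p : qp_eval (qp_opp p) = - qp_eval p.
Proof.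
by rewrite /qp_eval big_map -sumrN; apply: eq_bigr => t _; rewrite ratQN mulNr.
Qed.

Lemma qp_evalZ c p : qp_eval (qp_scale c p) = ratQ F c * qp_eval p.
Proof.
rewrite /qp_scale qp_eval_norm /qp_eval big_map mulr_sumr.
by apply: eq_bigr => t _; rewrite (ratQ_red charF) (ratQM charF) mulrA.
Qed.

Lemma qp_evalM p q : qp_eval (qp_mul p q) = qp_eval p * qp_eval q.
Proof.
rewrite /qp_mul qp_eval_norm /qp_eval big_allpairs_dep mulr_suml.
apply: eq_bigr => t _; rewrite mulr_sumr; apply: eq_bigr => t' _ /=.
rewrite (ratQ_red charF) (ratQM charF) (perm_big _ (permEl (perm_sort leq _))) big_cat /=.
ring.
Qed.

Lemma qp_eval_sum ps : qp_eval (qp_sum ps) = \sum_(p <- ps) qp_eval p.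
Proof. by elim: ps => [|p ps IH]; rewrite ?big_nil ?qp_eval_nil // big_cons qp_evalD IH. Qed.

End Evaluation.

Definition factor_closed (S : seq word) : Prop :=
  forall w, w \in S -> forall j, (take j w \in S) && (drop j w \in S).

Section CoefficientVectors.
Variable S : seq word.

Definition cvec := seq qmpoly.

Definition cv_get (Z : cvec) (w : word) : qmpoly := nth [::] Z (index w S).
Definition cv_build (f : word -> qmpoly) : cvec := map f S.

Definition cv_zero : cvec := cv_build (fun _ => [::]).
Definition cv_mono (w0 : word) : cvec :=
  cv_build (fun w => if w == w0 then qp_const (Qmake 1 1) else [::]).
Definition cv_var (off : nat) : cvec :=
  cv_build (fun w => if w == [::] then [::] else qp_var (off + index w S)).
Definition cv_add (Z1 Z2 : cvec) : cvec :=
  cv_build (fun w => qp_add (cv_get Z1 w) (cv_get Z2 w)).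
Definition cv_opp (Z : cvec) : cvec := cv_build (fun w => qp_opp (cv_get Z w)).
Definition cv_sub (Z1 Z2 : cvec) : cvec := cv_add Z1 (cv_opp Z2).
Definition cv_scale (c : Q) (Z : cvec) : cvec :=
  cv_build (fun w => qp_scale c (cv_get Z w)).
Definition cv_pscale (c : qmpoly) (Z : cvec) : cvec :=
  cv_build (fun w => qp_mul c (cv_get Z w)).
Definition cv_mul (Z1 Z2 : cvec) : cvec := cv_build (fun w =>
  qp_sum [seq qp_mul (cv_get Z1 (take j w)) (cv_get Z2 (drop j w))
         | j <- iota 0 (size w).+1]).

Fixpoint cv_pow (Z : cvec) (k : nat) : cvec :=
  match k with 0 | 1 => Z | k'.+1 => cv_mul (cv_pow Z k') Z end.

Definition cv_series (c : nat -> Q) (Z : cvec) : cvec :=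
  foldr (fun k acc => cv_add (cv_scale (c k) (cv_pow Z k)) acc) cv_zero
        (index_iota 1 8).

Definition cv_bch (Z1 Z2 : cvec) : cvec :=
  let a := cv_series exp_coef Z1 in let b := cv_series exp_coef Z2 in
  cv_series log_coef (cv_add (cv_add a b) (cv_mul a b)).
Definition cv_gcomm (Z1 Z2 : cvec) : cvec :=
  cv_bch (cv_bch (cv_bch (cv_opp Z1) (cv_opp Z2)) Z1) Z2.
Definition cv_grp_engel (n : nat) (Z1 Z2 : cvec) : cvec :=
  iter n (fun Z => cv_gcomm Z Z2) Z1.
Definition cv_lbr (Z1 Z2 : cvec) : cvec := cv_sub (cv_mul Z1 Z2) (cv_mul Z2 Z1).
Definition cv_lie_engel (n : nat) (Z1 Z2 : cvec) : cvec :=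
  iter n (fun Z => cv_lbr Z Z2) Z1.

Definition cv_eq0 (Z : cvec) : bool := all (fun w => nilp (cv_get Z w)) S.

Section Representation.
Variable F : fieldType.
Hypothesis charF : [pchar F] =i pred0.
Variable rho : nat -> F.
Implicit Types p q : ncpoly F.

Definition cv_repr (Z : cvec) p : Prop :=
  {in S, forall w, qp_eval rho (cv_get Z w) = p w}.

Lemma cv_get_build f w : w \in S -> cv_get (cv_build f) w = f w.
Proof. by move=> wS; rewrite /cv_get (nth_map [::]) ?index_mem // nth_index. Qed.

Lemma cv_repr_zero : cv_repr cv_zero (pzero F).
Proof. by move=> w wS; rewrite cv_get_build // qp_eval_nil. Qed.

Lemma cv_repr_mono w0 : cv_repr (cv_mono w0) (mono F w0).
Proof.
move=> w wS; rewrite cv_get_build // /mono.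
by case: eqP => _; rewrite ?qp_eval_nil // qp_eval_const /ratQ /= divr1.
Qed.

Lemma cv_repr_var off p : p [::] = 0 ->
  {in S, forall w, rho (off + index w S) = p w} -> cv_repr (cv_var off) p.
Proof.
move=> p0 hp w wS; rewrite cv_get_build //.
by case: eqP => [->|_]; rewrite ?qp_eval_nil ?p0 // qp_eval_var hp.
Qed.

Lemma cv_repr_add Z1 Z2 p q :
  cv_repr Z1 p -> cv_repr Z2 q -> cv_repr (cv_add Z1 Z2) (padd p q).
Proof. by move=> h1 h2 w wS; rewrite cv_get_build // (qp_evalD charF) h1 // h2. Qed.

Lemma cv_repr_opp Z p : cv_repr Z p -> cv_repr (cv_opp Z) (popp p).
Proof. by move=> h w wS; rewrite cv_get_build // qp_evalN h. Qed.

Lemma cv_repr_sub Z1 Z2 p q :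
  cv_repr Z1 p -> cv_repr Z2 q -> cv_repr (cv_sub Z1 Z2) (psub p q).
Proof. by move=> h1 h2; apply: cv_repr_add h1 (cv_repr_opp h2). Qed.

Lemma cv_repr_scale c k Z p :
  ratQ F c = k -> cv_repr Z p -> cv_repr (cv_scale c Z) (pscale k p).
Proof. by move=> ck h w wS; rewrite cv_get_build // (qp_evalZ charF) h // ck. Qed.

Lemma cv_repr_pscale c Z p : cv_repr Z p ->
  cv_repr (cv_pscale c Z) (pscale (qp_eval rho c) p).
Proof. by move=> h w wS; rewrite cv_get_build // (qp_evalM charF) h. Qed.

Hypothesis S_closed : factor_closed S.

Lemma cv_repr_mul Z1 Z2 p q :
  cv_repr Z1 p -> cv_repr Z2 q -> cv_repr (cv_mul Z1 Z2) (pmul p q).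
Proof.
move=> h1 h2 w wS; rewrite cv_get_build // (qp_eval_sum charF) big_map.
rewrite /pmul -(big_mkord xpredT (fun j => p (take j w) * q (drop j w))).
apply: eq_bigr => j _; have /andP[tS dS] := S_closed wS j.
by rewrite (qp_evalM charF) h1 // h2.
Qed.

Lemma cv_repr_pow Z p k : cv_repr Z p -> cv_repr (cv_pow Z k) (ppow p k).
Proof. by move=> h; elim: k => [|[|k] IH] //; exact: cv_repr_mul. Qed.

Lemma cv_repr_series (c : nat -> Q) (a : nat -> F) Z p :
  (forall k, (0 < k < 8)%N -> ratQ F (c k) = a k) -> cv_repr Z p ->
  cv_repr (cv_series c Z) (\big[@padd F/pzero F]_(1 <= k < 8) pscale (a k) (ppow p k)).
Proof.
move=> ca h; rewrite /cv_series.
have : {in index_iota 1 8, forall k, ratQ F (c k) = a k}.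
  by move=> k; rewrite mem_index_iota; exact: ca.
elim: (index_iota 1 8) => [_|k r IH hr]; first by rewrite big_nil; exact: cv_repr_zero.
rewrite big_cons /=; apply: cv_repr_add.
  by apply: cv_repr_scale (cv_repr_pow _ h); apply: hr; exact: mem_head.
by apply: IH => k' hk'; apply: hr; rewrite inE hk' orbT.
Qed.

Lemma cv_repr_bch Z1 Z2 u v :
  cv_repr Z1 u -> cv_repr Z2 v -> cv_repr (cv_bch Z1 Z2) (bch u v).
Proof.
have expE Z p : cv_repr Z p -> cv_repr (cv_series exp_coef Z) (pexpm1 p).
  by apply: cv_repr_series => k _; exact: ratQ_exp_coef.
move=> /expE a /expE b.
apply: cv_repr_series (cv_repr_add (cv_repr_add a b) (cv_repr_mul a b)).
by move=> k /andP[k0 _]; exact: ratQ_log_coef.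
Qed.

Lemma cv_repr_gcomm Z1 Z2 u v :
  cv_repr Z1 u -> cv_repr Z2 v -> cv_repr (cv_gcomm Z1 Z2) (gcomm u v).
Proof.
move=> h1 h2; rewrite /cv_gcomm /gcomm.
apply: (cv_repr_bch _ h2); apply: (cv_repr_bch _ h1).
by apply: cv_repr_bch; exact: cv_repr_opp.
Qed.

Lemma cv_repr_grp_engel n Z1 Z2 u v : cv_repr Z1 u -> cv_repr Z2 v ->
  cv_repr (cv_grp_engel n Z1 Z2) (grp_engel n u v).
Proof. by move=> h1 h2; elim: n => [|n IH] //=; exact: cv_repr_gcomm. Qed.

Lemma cv_repr_lie_engel n Z1 Z2 u v : cv_repr Z1 u -> cv_repr Z2 v ->
  cv_repr (cv_lie_engel n Z1 Z2) (lie_engel n u v).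
Proof.
move=> h1 h2; elim: n => [|n IH] //=.
by rewrite /cv_lbr /lbr; apply: cv_repr_sub; apply: cv_repr_mul.
Qed.

Lemma cv_eq0_repr Z p : cv_repr Z p -> cv_eq0 Z -> {in S, p =1 pzero F}.
Proof.
move=> h /allP Z0 w wS; rewrite -h //.
by case: (cv_get Z w) (Z0 w wS) => // _; rewrite qp_eval_nil.
Qed.

End Representation.
End CoefficientVectors.

Section FreeAlgebra.
Variable F : fieldType.
Implicit Types (p q a : ncpoly F) (G : ncpoly F -> Prop).

Lemma in_A0 : in_A (pzero F).
Proof. by split => //; exists [::]. Qed.

Lemma in_AD p q : in_A p -> in_A q -> in_A (padd p q).
Proof.
move=> [p0 [s1 h1]] [q0 [s2 h2]]; split; first by rewrite /padd p0 q0 addr0.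
exists (s1 ++ s2) => w; rewrite mem_cat negb_or => /andP[w1 w2].
by rewrite /padd h1 // h2 // addr0.
Qed.

Lemma in_AN p : in_A p -> in_A (popp p).
Proof.
move=> [p0 [s h]]; split; first by rewrite /popp p0 oppr0.
by exists s => w ws; rewrite /popp h // oppr0.
Qed.

Lemma in_AZ c p : in_A p -> in_A (pscale c p).
Proof.
move=> [p0 [s h]]; split; first by rewrite /pscale p0 mulr0.
by exists s => w ws; rewrite /pscale h // mulr0.
Qed.

Lemma in_AM p q : in_A p -> in_A q -> in_A (pmul p q).
Proof.
move=> [p0 [s1 h1]] [q0 [s2 h2]]; split; first by rewrite /pmul big_ord1 /= p0 mul0r.
exists [seq u ++ v | u <- s1, v <- s2] => w hw; rewrite /pmul big1 // => i _.
case: (boolP (take i w \in s1)) => [u1|u1]; last by rewrite h1 // mul0r.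
case: (boolP (drop i w \in s2)) => [v2|v2]; last by rewrite h2 // mulr0.
by case/negP: hw; rewrite -[w](cat_take_drop i) (allpairs_f cat u1 v2).
Qed.

Lemma in_A_lie_engel n p q : in_A p -> in_A q -> in_A (lie_engel n p q).
Proof.
move=> hp hq; elim: n => [|n IH] //=.
by apply: in_AD (in_AN _); apply: in_AM.
Qed.

Lemma in_A_mono w : w != [::] -> in_A (mono F w).
Proof.
move=> w0; split; first by rewrite /mono eq_sym (negbTE w0).
by exists [:: w] => u; rewrite inE /mono => /negbTE ->.
Qed.

Lemma mono_cat u v : mono F (u ++ v) = pmul (mono F u) (mono F v).
Proof.
apply: functional_extensionality => w; rewrite /pmul /mono.
have split_eq (i : 'I_(size w).+1) :
    (if take i w == u then 1 else 0) * (if drop i w == v then 1 else 0)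
    = (if (i == size u :> nat) && (w == u ++ v) then 1 else 0 : F).
  case: (boolP (_ && _)) => [/andP[/eqP-> /eqP->]|huv].
    by rewrite take_size_cat // drop_size_cat // !eqxx mulr1.
  case: eqP => [tu|]; last by rewrite mul0r.
  case: eqP => [dv|]; last by rewrite mulr0.
  case/negP: huv; rewrite -tu -dv cat_take_drop eqxx andbT size_take.
  by case: ltnP => // h; rewrite eqn_leq h -ltnS ltn_ord.
rewrite (eq_bigr _ (fun i _ => split_eq i)).
have [->|wuv] := eqVneq w (u ++ v); last by rewrite big1 // => i _; rewrite andbF.
have su : (size u < (size (u ++ v)).+1)%N by rewrite ltnS size_cat leq_addr.
rewrite (bigD1 (Ordinal su)) //= eqxx big1 ?addr0 // => i iu.
by rewrite andbT; case: eqP => // ie; case/eqP: iu; exact: val_inj.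
Qed.

Lemma pmul_eq_in (S : seq word) p1 p2 q1 q2 : factor_closed S ->
  {in S, p1 =1 p2} -> {in S, q1 =1 q2} -> {in S, pmul p1 q1 =1 pmul p2 q2}.
Proof.
move=> S_closed hp hq w wS; apply: eq_bigr => i _.
by have /andP[tS dS] := S_closed w wS i; rewrite hp // hq.
Qed.

Lemma gen_ideal_gen G p : G p -> gen_ideal G p.
Proof. by move=> Gp J _; apply. Qed.

Lemma gen_ideal0 G : gen_ideal G (pzero F).
Proof. by move=> J []. Qed.

Lemma gen_idealD G p q : gen_ideal G p -> gen_ideal G q -> gen_ideal G (padd p q).
Proof. by move=> hp hq J idJ GJ; case: (idJ) => _ + _ _ _; apply; [apply: hp | apply: hq]. Qed.

Lemma gen_idealZ G c p : gen_ideal G p -> gen_ideal G (pscale c p).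
Proof. by move=> hp J idJ GJ; case: (idJ) => _ _ + _ _; apply; apply: hp. Qed.

Lemma gen_idealMr G a p : in_A a -> gen_ideal G p -> gen_ideal G (pmul p a).
Proof. by move=> ha hp J idJ GJ; case: (idJ) => _ _ _ _; apply => //; apply: hp. Qed.

Lemma gen_ideal_vanishing G (S : seq word) q :
  (forall w, w \notin S -> gen_ideal G (mono F w)) ->
  (exists s : seq word, forall w, w \notin s -> q w = 0) -> {in S, q =1 pzero F} ->
  gen_ideal G q.
Proof.
move=> monoG [s]; elim: s q => [|w0 s IH] q qs qS.
  have -> : q = pzero F by apply: functional_extensionality => w; exact: qs.
  exact: gen_ideal0.
have -> : q = padd (padd q (pscale (- q w0) (mono F w0))) (pscale (q w0) (mono F w0)).
  by apply: functional_extensionality => w; rewrite /padd /pscale; ring.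
apply: gen_idealD.
  apply: IH => w; rewrite /padd /pscale /mono.
    move=> ws; case: eqP => [->|ww0]; first by rewrite mulr1 addrN.
    by rewrite mulr0 addr0 qs // inE negb_or ws andbT; apply/eqP.
  move=> wS; rewrite qS //; case: eqP => [e|_]; last by rewrite mulr0 addr0.
  by rewrite -e qS // oppr0 mul0r addr0.
have [w0S|w0S] := boolP (w0 \in S); last by apply: gen_idealZ; exact: monoG.
have -> : pscale (q w0) (mono F w0) = pzero F.
  by apply: functional_extensionality => w; rewrite /pscale qS // mul0r.
exact: gen_ideal0.
Qed.

End FreeAlgebra.

Fixpoint words (n : nat) : seq word :=
  if n is n'.+1 then [seq b :: w | b <- [:: lx; ly], w <- words n'] else [:: [::]].

Lemma mem_words w : w \in words (size w).
Proof.
elim: w => [|b w IH] //.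
change (b :: w \in [seq c :: u | c <- [:: lx; ly], u <- words (size w)]).
by apply/allpairsP; exists (b, w); case: b.
Qed.

(* Stored evaluated, so that the computations below do not recompute it. *)
Definition S0 : seq word := Eval vm_compute in
  [seq w <- flatten [seq words n | n <- iota 0 8] | infix w m1 || infix w m2].

Lemma infix_m12_size w : infix w m1 || infix w m2 -> (size w <= 7)%N.
Proof. by case/orP => /infixW/size_subseq. Qed.

Lemma mem_S0 w : (w \in S0) = infix w m1 || infix w m2.
Proof.
have -> : S0 = [seq w <- flatten [seq words n | n <- iota 0 8] | infix w m1 || infix w m2].
  by vm_compute.
rewrite mem_filter; case: orP => [wm|] //; rewrite andTb; apply/flattenP.
exists (words (size w)); last exact: mem_words.
by apply: map_f; rewrite mem_iota ltnS infix_m12_size //; apply/orP.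
Qed.

Lemma S0_factor_closed : factor_closed S0.
Proof.
move=> w; rewrite mem_S0 => wm j; rewrite !mem_S0.
have tw : infix (take j w) w by rewrite -{2}(cat_take_drop j w) prefix_infix.
have dw : infix (drop j w) w by rewrite -{2}(cat_take_drop j w) suffix_infix.
by case/orP: wm => wm; rewrite (infix_trans tw wm) (infix_trans dw wm) ?orbT.
Qed.

Lemma nil_in_S0 : [::] \in S0.
Proof. by rewrite mem_S0 infix0s. Qed.

Lemma m1_in_S0 : m1 \in S0.
Proof. by rewrite mem_S0 infix_refl. Qed.

Lemma m2_in_S0 : m2 \in S0.
Proof. by rewrite mem_S0 infix_refl orbT. Qed.

Lemma monomial_gen_notin_S0 w :
  [\/ size w = 8%N, (2 < count (pred1 lx) w)%N, [/\ size w = 7%N, w != m1 & w != m2]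
     | [/\ (0 < size w < 7)%N, ~~ infix w m1 & ~~ infix w m2]] ->
  w \notin S0.
Proof.
rewrite mem_S0; case=> [w8|wx|[w7 wm1 wm2]|[_ wm1 wm2]]; last by rewrite negb_or wm1.
- by apply/negP => /infix_m12_size; rewrite w8.
- by apply: contraTN wx => /orP[] /infixW/(leq_count_subseq (pred1 lx)); rewrite -leqNgt.
- rewrite negb_or; apply/andP; split; [move: wm1 | move: wm2]; apply: contraNN => /infixW wm;
    by rewrite -(size_subseq_leqif wm) w7.
Qed.

Definition w5 : word := [:: lx; ly; ly; ly; lx; ly].

Definition cv_rel5 : cvec :=
  cv_add S0 (cv_add S0 (cv_scale S0 (Qmake 2 1) (cv_mono S0 w5))
                       (cv_scale S0 (Qmake (-5) 1) (cv_mono S0 [:: ly; lx; ly; lx; ly; ly])))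
            (cv_add S0 (cv_scale S0 (Qmake (-2) 1) (cv_mono S0 [:: ly; lx; ly; ly; ly; lx]))
                       (cv_scale S0 (Qmake 5 1) (cv_mono S0 [:: ly; ly; lx; ly; lx; ly]))).
Definition cv_rel6 : cvec :=
  cv_add S0 (cv_scale S0 (Qmake 2 1) (cv_mono S0 m1))
            (cv_scale S0 (Qmake (-5) 1) (cv_mono S0 m2)).
Definition cv_rel_comb (c5 c6 : qmpoly) : cvec :=
  cv_add S0 (cv_pscale S0 c5 cv_rel5) (cv_pscale S0 c6 cv_rel6).

(* rel5 has coefficient 2 at w5 and none at m1, rel6 has coefficient 2 at m1
   and none at w5: the only candidate combination is read off these two
   coefficients. *)
Definition cv_in_rel_span (Z : cvec) : bool :=
  let c5 := qp_scale (Qmake 1 2) (cv_get S0 Z w5) in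
  let c6 := qp_scale (Qmake 1 2) (cv_get S0 Z m1) in
  cv_eq0 S0 (cv_sub S0 Z (cv_rel_comb c5 c6)).

Lemma cv_rel_comb_mul_in_span :
  let a := cv_var S0 2 in let r := cv_rel_comb (qp_var 0) (qp_var 1) in
  cv_in_rel_span (cv_mul S0 a r) && cv_in_rel_span (cv_mul S0 r a).
Proof. by vm_compute. Qed.

Definition lie_engel_generic : cvec :=
  cv_lie_engel S0 5 (cv_var S0 0) (cv_var S0 (size S0)).

Lemma lie_engel_generic_in_span : cv_in_rel_span lie_engel_generic.
Proof. by vm_compute. Qed.

Definition cv_obstruction (Z : cvec) : qmpoly :=
  qp_add (qp_scale (Qmake 5 1) (cv_get S0 Z m1)) (qp_scale (Qmake 2 1) (cv_get S0 Z m2)).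

Lemma grp_engel_xy_obstruction :
  cv_obstruction (cv_grp_engel S0 5 (cv_mono S0 [:: lx]) (cv_mono S0 [:: ly]))
  = qp_const (Qmake 12 1).
Proof. by vm_compute. Qed.

Section TheIdeal.
Variable F : fieldType.
Hypothesis charF : [pchar F] =i pred0.
Implicit Types (p q a : ncpoly F) (t s : F).

Definition rel_comb t s : ncpoly F := padd (pscale t (rel5 F)) (pscale s (rel6 F)).

Definition in_rel_span p : Prop := exists t s, {in S0, p =1 rel_comb t s}.

Lemma cv_repr_rel_comb rho c5 c6 :
  cv_repr S0 rho (cv_rel_comb c5 c6) (rel_comb (qp_eval rho c5) (qp_eval rho c6)).
Proof.
have rmono w : cv_repr S0 rho (cv_mono S0 w) (mono F w) by exact: cv_repr_mono.
rewrite /cv_rel_comb /rel_comb /cv_rel5 /rel5 /cv_rel6 /rel6.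
by do !first [ apply: (cv_repr_add charF) | apply: (cv_repr_pscale charF)
             | apply: (cv_repr_scale charF) (rmono _); rewrite ratQ_int ].
Qed.

Lemma cv_in_rel_spanP rho Z p : cv_repr S0 rho Z p -> cv_in_rel_span Z -> in_rel_span p.
Proof.
move=> hZ /(cv_eq0_repr (cv_repr_sub charF hZ (cv_repr_rel_comb rho _ _))) h0.
by eexists; eexists => w wS; apply/eqP; rewrite -subr_eq0; apply/eqP; exact: h0.
Qed.

Definition inI_spec p : Prop := in_A p /\ in_rel_span p.

Lemma in_rel_span_mul a t s : in_A a ->
  in_rel_span (pmul a (rel_comb t s)) /\ in_rel_span (pmul (rel_comb t s) a).
Proof.
move=> ha; pose rho k := if k is k'.+2 then a (nth [::] S0 k') else if k == 0%N then t else s.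
have Ra : cv_repr S0 rho (cv_var S0 2) a.
  by apply: (cv_repr_var (rho := rho) ha.1) => w wS; rewrite /rho add2n nth_index.
have Rr := cv_repr_rel_comb rho (qp_var 0) (qp_var 1); rewrite !qp_eval_var in Rr.
have /andP[ar ra] := cv_rel_comb_mul_in_span.
split; first exact: cv_in_rel_spanP (cv_repr_mul charF S0_factor_closed Ra Rr) ar.
exact: cv_in_rel_spanP (cv_repr_mul charF S0_factor_closed Rr Ra) ra.
Qed.

Lemma inI_spec_ideal : is_ideal inI_spec.
Proof.
have rel_combE t s w : rel_comb t s w = t * rel5 F w + s * rel6 F w by [].
split.
- split; first exact: in_A0.
  by exists 0, 0 => w _; rewrite rel_combE !mul0r addr0.
- move=> p q [hp [t1 [s1 e1]]] [hq [t2 [s2 e2]]]; split; first exact: in_AD.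
  by exists (t1 + t2), (s1 + s2) => w wS; rewrite /padd e1 // e2 // !rel_combE; ring.
- move=> c p [hp [t [s e]]]; split; first exact: in_AZ.
  by exists (c * t), (c * s) => w wS; rewrite /pscale e // !rel_combE; ring.
- move=> a p ha [hp [t [s e]]]; split; first exact: in_AM.
  have [[t' [s' e']] _] := in_rel_span_mul t s ha.
  by exists t', s' => w wS; rewrite -e' //; exact: (pmul_eq_in S0_factor_closed).
- move=> a p ha [hp [t [s e]]]; split; first exact: in_AM.
  have [_ [t' [s' e']]] := in_rel_span_mul t s ha.
  by exists t', s' => w wS; rewrite -e' //; exact: (pmul_eq_in S0_factor_closed).
Qed.

Lemma in_A_rel5 : in_A (rel5 F).
Proof. by rewrite /rel5; do !apply: in_AD; apply: in_AZ; apply: in_A_mono. Qed.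

Lemma in_A_rel6 : in_A (rel6 F).
Proof. by rewrite /rel6; apply: in_AD; apply: in_AZ; apply: in_A_mono. Qed.

Lemma gensI_inI_spec g : gensI g -> inI_spec g.
Proof.
case=> [[w [-> /monomial_gen_notin_S0 wS]] | [->|->]]; split.
- by apply: in_A_mono; apply: contraNneq wS => ->; exact: nil_in_S0.
- exists 0, 0 => u uS; rewrite /rel_comb /padd /pscale !mul0r addr0 /mono.
  by case: eqP => // uw; rewrite -uw uS in wS.
- exact: in_A_rel5.
- by exists 1, 0 => u _; rewrite /rel_comb /padd /pscale mul1r mul0r addr0.
- exact: in_A_rel6.
- by exists 0, 1 => u _; rewrite /rel_comb /padd /pscale mul1r mul0r add0r.
Qed.

Lemma mono_inI w : w \notin S0 -> inI (mono F w).
Proof.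
move=> wS; have w0 : w != [::] by apply: contraNneq wS => ->; exact: nil_in_S0.
have gen8 u : size u = 8%N -> inI (mono F u).
  by move=> u8; apply: gen_ideal_gen; left; exists u; split => //; apply: Or41.
have [w7|w8] := leqP (size w) 7; last first.
  have [/gen8 //|w8'] := eqVneq (size w) 8%N.
  have w9 : (8 < size w)%N by rewrite ltn_neqAle eq_sym w8' w8.
  rewrite -(cat_take_drop 8 w) mono_cat; apply: gen_idealMr.
    by apply: in_A_mono; rewrite -size_eq0 size_drop subn_eq0 -ltnNge.
  by apply: gen8; rewrite size_take w9.
apply: gen_ideal_gen; left; exists w; split => //.
have [w7'|w6] := eqVneq (size w) 7%N.
  by apply: Or43; split => //; apply: contraNneq wS => ->; [exact: m1_in_S0 | exact: m2_in_S0].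
rewrite mem_S0 negb_or in wS; case/andP: wS => wm1 wm2.
by apply: Or44; split => //; rewrite lt0n size_eq0 w0 ltn_neqAle w6.
Qed.

Lemma inIP p : inI p <-> inI_spec p.
Proof.
split; first by move/(_ _ inI_spec_ideal gensI_inI_spec).
move=> [hp [t [s e]]].
have -> : p = padd (psub p (rel_comb t s)) (rel_comb t s).
  by apply: functional_extensionality => w; rewrite /psub /padd /popp; ring.
apply: gen_idealD.
  apply: (gen_ideal_vanishing mono_inI).
    by have [_ supp] := in_AD hp (in_AN (in_AD (in_AZ t in_A_rel5) (in_AZ s in_A_rel6))).
  by move=> w wS; rewrite /psub /padd /popp e // addrN.
by apply: gen_idealD; apply: gen_idealZ; apply: gen_ideal_gen; right; [left | right].
Qed.

Lemma lie_engel5_inI (u v : ncpoly F) : in_A u -> in_A v -> inI (lie_engel 5 u v).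
Proof.
move=> hu hv; pose n := size S0.
pose rho k := if (k < n)%N then u (nth [::] S0 k) else v (nth [::] S0 (k - n)).
have Ru : cv_repr S0 rho (cv_var S0 0) u.
  apply: (cv_repr_var (rho := rho) hu.1) => w wS.
  by rewrite /rho add0n index_mem wS nth_index.
have Rv : cv_repr S0 rho (cv_var S0 n) v.
  apply: (cv_repr_var (rho := rho) hv.1) => w wS.
  by rewrite /rho ltnNge leq_addr /= addKn nth_index.
apply/inIP; split; first exact: in_A_lie_engel.
exact: cv_in_rel_spanP (cv_repr_lie_engel charF S0_factor_closed 5 Ru Rv)
                       lie_engel_generic_in_span.
Qed.

(* Kills rel6 = 2 m1 - 5 m2 and rel5, which has no m1, m2 terms. *)
Definition obstruction p : F := 5 * p m1 + 2 * p m2.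

Lemma obstruction_I p : inI p -> obstruction p = 0.
Proof.
move=> /inIP[_ [t [s e]]]; rewrite /obstruction !e ?m1_in_S0 ?m2_in_S0 //.
by rewrite /rel_comb /padd /pscale /rel5 /rel6 /padd /pscale /mono /=; ring.
Qed.

Lemma cv_repr_obstruction rho Z p :
  cv_repr S0 rho Z p -> qp_eval rho (cv_obstruction Z) = obstruction p.
Proof.
(* [a], [b] are kept abstract: unifying against [cv_get] terms would make Rocq
   evaluate them. *)
move=> R.
have lin (a b : qmpoly) :
    qp_eval rho (qp_add (qp_scale (Qmake 5 1) a) (qp_scale (Qmake 2 1) b))
    = 5 * qp_eval rho a + 2 * qp_eval rho b.
  by rewrite (qp_evalD charF) !(qp_evalZ charF) !ratQ_int.
rewrite /cv_obstruction lin /obstruction.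
by congr (5 * _ + 2 * _); apply: R; [exact: m1_in_S0 | exact: m2_in_S0].
Qed.

Lemma grp_engel5_notin_I : ~ inI (grp_engel 5 (mono F [:: lx]) (mono F [:: ly])).
Proof.
pose rho (k : nat) : F := 0.
have rmono w : cv_repr S0 rho (cv_mono S0 w) (mono F w) by exact: cv_repr_mono.
have R := cv_repr_grp_engel charF S0_factor_closed 5 (rmono [:: lx]) (rmono [:: ly]).
move/obstruction_I; rewrite -(cv_repr_obstruction R) grp_engel_xy_obstruction.
by rewrite qp_eval_const ratQ_int => /eqP; rewrite ((pcharf0P F).1 charF 12).
Qed.

End TheIdeal.

Theorem corollary1p4 (F : fieldType) (charF0 : [pchar F] =i pred0) :
  (forall u v : ncpoly F, in_A u -> in_A v -> inI (lie_engel 5 u v))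
  /\
  (exists u v : ncpoly F, [/\ in_A u, in_A v & ~ inI (grp_engel 5 u v)]).
Proof.
split; first exact: lie_engel5_inI.
by exists (mono F [:: lx]), (mono F [:: ly]); split; try apply: in_A_mono;
  last exact: grp_engel5_notin_I.
Qed.
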